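(* Let $d\ge2$, $\varepsilon>0$, $s=\lceil d/(1+e^{\varepsilon})\rceil$, and consider the MMRC mechanism simulating $\texttt{Subset Selection}$ with $N$ candidates and estimator $\hat{\mathbf{x}}^{\mathrm{mmrc}}=(\mathbf{z}_K-b_{\mathrm{mmrc}}\mathbf{1})/m_{\mathrm{mmrc}}$. Then for every $\mathbf{x}\in\{e_1,\dots,e_d\}$, $\mathbb{E}[\hat{\mathbf{x}}^{\mathrm{mmrc}}]=\mathbf{x}$, the expectation being over the candidates and $K$.
   Context: $\texttt{Subset Selection}$: inputs $\mathcal{X}=\{e_1,\dots,e_d\}$ (standard basis of $\mathbb{R}^d$); outputs $\mathcal{Z}=\{\mathbf{z}\in\{0,1\}^d:\sum_iz_i=s\}$; for $\mathbf{x}=e_j$ let $\mathsf{Cap}_{\mathbf{x}}=\{\mathbf{z}\in\mathcal{Z}:z_j=1\}$; $q^{\mathrm{ss}}(\mathbf{z}\mid\mathbf{x})=c_1=\frac{e^\varepsilon}{\binom{d-1}{s-1}e^\varepsilon+\binom{d-1}{s}}$ if $\mathbf{z}\in\mathsf{Cap}_{\mathbf{x}}$ and $c_2=\frac{1}{\binom{d-1}{s-1}e^\varepsilon+\binom{d-1}{s}}$ otherwise. Let $\bar\theta=s/d$ (the probability a uniform element of $\mathcal{Z}$ lies in $\mathsf{Cap}_{\mathbf{x}}$). MMRC: draw $\mathbf{z}_1,\dots,\mathbf{z}_N$ i.i.d. uniform on $\mathcal{Z}$; $\theta=\frac1N\#\{k:\mathbf{z}_k\in\mathsf{Cap}_{\mathbf{x}}\}$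 (so $N\theta\sim\mathrm{Binom}(N,s/d)$); $\pi^{\mathrm{mrc}}(k)=\frac1N\frac{c_i}{\theta c_1+(1-\theta)c_2}$ ($i=1$ for cap candidates, $i=2$ otherwise); $t_u=\frac1N\frac{c_1}{\bar\theta c_1+(1-\bar\theta)c_2}$, $t_l=\frac1N\frac{c_2}{\bar\theta c_1+(1-\bar\theta)c_2}$; $\pi^{\mathrm{mmrc}}=\pi^{\mathrm{mrc}}$ if $\theta=\bar\theta$; if $\theta<\bar\theta$, $\pi^{\mathrm{mmrc}}(k)=t_u$ on cap candidates and $\frac{1-N\theta t_u}{N(1-\theta)}$ otherwise; if $\theta>\bar\theta$, $\pi^{\mathrm{mmrc}}(k)=t_l$ on non-cap candidates and $\frac{1-N(1-\theta)t_l}{N\theta}$ otherwise; $K\sim\pi^{\mathrm{mmrc}}$. Let $G=\mathbb{E}_\theta\Big[\frac{e^\varepsilon\theta}{e^\varepsilon\bar\theta+1-\bar\theta}\mathbf{1}(\theta\le\bar\theta)+\frac{e^\varepsilon\bar\theta+\theta-\bar\theta}{e^\varepsilon\bar\theta+1-\bar\theta}\mathbf{1}(\theta>\bar\theta)\Big]$, $m_{\mathrm{mmrc}}=\frac{d}{d-1}G-\frac{s}{d-1}$, $b_{\mathrm{mmrc}}=\frac{1}{d-1}(s-G)$; $\mathbf{1}$ denotes the all-ones vector. *)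

From HB Require Import structures.
From mathcomp Require Import all_boot all_order all_algebra.
From mathcomp Require Import all_classical all_reals all_analysis.
Set Implicit Arguments. Unset Strict Implicit. Unset Printing Implicit Defensive.
Import Order.TTheory GRing.Theory Num.Theory.
Local Open Scope ring_scope.

Section MMRC.
Variables (R : realType) (d s N : nat) (eps : R).

(* Output space Z = {z in {0,1}^d : sum z = s}, represented by supports. *)
Definition Zset : {set {set 'I_d}} := [set A : {set 'I_d} | #|A| == s].

Definition zvec (A : {set 'I_d}) : 'rV[R]_d := \row_i (i \in A)%:R.

Definition ones : 'rV[R]_d := const_mx 1.

Definition evec (j : 'I_d) : 'rV[R]_d := delta_mx 0 j.

Definition ss_den : R :=
  'C(d - 1, s - 1)%:R * expR eps + 'C(d - 1, s)%:R.
Definition c1 : R := expR eps / ss_den.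
Definition c2 : R := 1 / ss_den.

Definition thetabar : R := s%:R / d%:R.

Definition cands := {ffun 'I_N -> {set 'I_d}}.

(* cap of x = e_j : sets containing j *)
Definition theta (j : 'I_d) (zs : cands) : R :=
  #|[set k : 'I_N | j \in zs k]|%:R / N%:R.

Definition pi_mrc (j : 'I_d) (zs : cands) (k : 'I_N) : R :=
  let th := theta j zs in
  N%:R^-1 * ((if j \in zs k then c1 else c2) / (th * c1 + (1 - th) * c2)).

Definition t_u : R := N%:R^-1 * (c1 / (thetabar * c1 + (1 - thetabar) * c2)).
Definition t_l : R := N%:R^-1 * (c2 / (thetabar * c1 + (1 - thetabar) * c2)).

Definition pi_mmrc (j : 'I_d) (zs : cands) (k : 'I_N) : R :=
  let th := theta j zs in
  if th == thetabar then pi_mrc j zs k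
  else if th < thetabar then
    (if j \in zs k then t_u else (1 - N%:R * th * t_u) / (N%:R * (1 - th)))
  else
    (if j \in zs k then (1 - N%:R * (1 - th) * t_l) / (N%:R * th) else t_l).

Definition Gint (th : R) : R :=
  let D := expR eps * thetabar + 1 - thetabar in
  (if th <= thetabar then expR eps * th / D else 0)
  + (if thetabar < th then (expR eps * thetabar + th - thetabar) / D else 0).

(* G = E_theta[Gint theta], with N theta ~ Binom(N, s/d) *)
Definition G : R :=
  \sum_(n < N.+1)
    'C(N, n)%:R * thetabar ^+ n * (1 - thetabar) ^+ (N - n) * Gint (n%:R / N%:R).

Definition m_mmrc : R := d%:R / (d%:R - 1) * G - s%:R / (d%:R - 1).
Definition b_mmrc : R := (d%:R - 1)^-1 * (s%:R - G).

Definition xhat (zs : cands) (k : 'I_N) : 'rV[R]_d :=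
  m_mmrc^-1 *: (zvec (zs k) - b_mmrc *: ones).

(* E[xhat]: candidates i.i.d. uniform on Z, then K ~ pi_mmrc *)
Definition E_xhat (j : 'I_d) : 'rV[R]_d :=
  \sum_(zs : cands | [forall k, zs k \in Zset])
    ((#|Zset|%:R : R) ^- N) *: \sum_(k < N) pi_mmrc j zs k *: xhat zs k.

End MMRC.

From mathcomp Require Import all_boot all_order all_algebra.
From mathcomp Require Import all_classical all_reals all_analysis.
From mathcomp Require Import fingroup perm.
From mathcomp Require Import ring lra.
Set Implicit Arguments. Unset Strict Implicit. Unset Printing Implicit Defensive.
Import Order.TTheory GRing.Theory Num.Theory.
Local Open Scope ring_scope.

(* On input e_j the weights of a draw sum to one, so E[xhat] = (E[z_K] - b 1) / m
   and it suffices to show E[z_K] = b 1 + m e_j.  The number of candidates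
   containing j is Binom(N, s/d), and when a fraction theta of them contains j
   these candidates carry total weight Gint theta; hence E[z_K]_j = G.  Every
   output has exactly s ones, so the coordinates of E[z_K] sum to s, while a
   transposition of two coordinates other than j leaves the whole experiment
   invariant.  So every other coordinate equals (s - G) / (d - 1) = b, and
   G - b = m. *)

Section PreimageCounting.
Variables (V : nmodType) (I : finType).

Lemma sumr_if_mem (S : {set I}) (a b : V) :
  \sum_i (if i \in S then a else b) = a *+ #|S| + b *+ #|~: S|.
Proof.
rewrite (bigID (mem S)) /= -!sumr_const; congr (_ + _).
  by apply: eq_bigr => i ->.
by apply: eq_big => [i | i /negbTE ->]; rewrite ?inE.
Qed.

Lemma prod_nat_if_mem (S : {set I}) (a b : nat) :
  (\prod_i (if i \in S then a else b) = a ^ #|S| * b ^ #|~: S|)%N.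
Proof.
rewrite (bigID (mem S)) /= -!prod_nat_const; congr (_ * _)%N.
  by apply: eq_bigr => i ->.
by apply: eq_big => [i | i /negbTE ->]; rewrite ?inE.
Qed.

Lemma sum_set_card (g : nat -> V) :
  \sum_(S : {set I}) g #|S| = \sum_(m < #|I|.+1) g m *+ 'C(#|I|, m).
Proof.
pose cardS (S : {set I}) : 'I_#|I|.+1 := inord #|S|.
have cardSE S : cardS S = #|S| :> nat by rewrite inordK ?ltnS ?max_card.
rewrite (partition_big cardS predT) //=.
apply: eq_bigr => m _; rewrite -card_draws -sumr_const.
apply: eq_big => [S | S /eqP <-]; last by rewrite cardSE.
by rewrite inE -(inj_eq val_inj) /= cardSE.
Qed.

Variables (T : finType) (Z : {set T}) (P : pred T).

Lemma card_ffun_preimset (S : {set I}) :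
  #|[set f : {ffun I -> T} | [forall i, f i \in Z] & [set i | P (f i)] == S]|
  = (#|[set x in Z | P x]| ^ #|S| * #|[set x in Z | ~~ P x]| ^ #|~: S|)%N.
Proof.
pose F i := [set x in Z | P x == (i \in S)].
have -> : #|[set f : {ffun I -> T} | [forall i, f i \in Z] & [set i | P (f i)] == S]|
          = #|family F|.
  apply: eq_card => f; rewrite !inE; apply/andP/familyP => [[/forallP fZ /eqP capS] i | fF].
    by rewrite /F -capS !inE fZ eqxx.
  split; first by apply/forallP => i; have /[!inE] /andP[] := fF i.
  by apply/eqP/setP => i; have /[!inE] /andP[_ /eqP] := fF i.
rewrite card_family foldrE big_image /= -prod_nat_if_mem.
apply: eq_bigr => i _; rewrite /F; case: (i \in S).
  by apply: eq_card => x; rewrite !inE eqb_id.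
by apply: eq_card => x; rewrite !inE eqbF_neg.
Qed.

Lemma sum_ffun_preimset_card (F : nat -> V) :
  \sum_(f : {ffun I -> T} | [forall i, f i \in Z]) F #|[set i | P (f i)]|
  = \sum_(m < #|I|.+1)
      F m *+ ('C(#|I|, m) * #|[set x in Z | P x]| ^ m
              * #|[set x in Z | ~~ P x]| ^ (#|I| - m)).
Proof.
set a := #|[set x in Z | P x]|; set b := #|[set x in Z | ~~ P x]|.
rewrite (partition_big (fun f : {ffun I -> T} => [set i | P (f i)]) predT) //=.
transitivity (\sum_(S : {set I}) F #|S| *+ (a ^ #|S| * b ^ (#|I| - #|S|))).
  apply: eq_bigr => S _.
  rewrite -(cardsC S) addKn -card_ffun_preimset -sumr_const.
  by apply: eq_big => [f | f /andP[_ /eqP ->]]; rewrite ?inE.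
rewrite (sum_set_card (fun m => F m *+ (a ^ m * b ^ (#|I| - m)))).
by apply: eq_bigr => m _; rewrite -mulrnA mulnC mulnA.
Qed.
End PreimageCounting.

Lemma ceil_nat_bounds (R : archiRealFieldType) (x : R) (s n : nat) :
  s%:Z = Num.ceil x -> 0 < x -> x <= n%:R - 1 -> (0 < s < n)%N.
Proof.
move=> s_ceil x_gt0 x_le; rewrite -!ltz_nat s_ceil ceil_gt0 x_gt0.
by rewrite -[n%:Z](subrK 1) ltzD1 ceil_le_int intrB.
Qed.

Section MMRC.
Variables (R : realType) (d s N : nat) (eps : R).
Hypotheses (s_gt0 : (0 < s)%N) (s_lt_d : (s < d)%N) (N_gt0 : (0 < N)%N).

Let d_gt0 : (0 < d)%N := ltn_trans s_gt0 s_lt_d.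

Local Notation tb := (thetabar R d s).
Local Notation n := (N%:R : R).

Lemma ss_den_gt0 : 0 < ss_den d s eps.
Proof.
rewrite /ss_den ltr_pwDl ?ler0n // mulr_gt0 ?expR_gt0 // ltr0n bin_gt0.
by rewrite leq_sub2r // ltnW.
Qed.

Lemma thetabar_ge0 : 0 <= tb.
Proof. by rewrite /thetabar divr_ge0 ?ler0n. Qed.

Lemma thetabar_le1 : tb <= 1.
Proof. by rewrite /thetabar ler_pdivrMr ?mul1r ?ler_nat ?ltr0n // ltnW. Qed.

Definition pi_cap (th : R) : R :=
  if th == tb then n^-1 * (c1 d s eps / (th * c1 d s eps + (1 - th) * c2 d s eps))
  else if th < tb then t_u d s N eps
  else (1 - n * (1 - th) * t_l d s N eps) / (n * th).

Definition pi_offcap (th : R) : R :=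
  if th == tb then n^-1 * (c2 d s eps / (th * c1 d s eps + (1 - th) * c2 d s eps))
  else if th < tb then (1 - n * th * t_u d s N eps) / (n * (1 - th))
  else t_l d s N eps.

Lemma pi_mmrcE j (zs : cands d N) k :
  pi_mmrc s eps j zs k =
  if j \in zs k then pi_cap (theta R j zs) else pi_offcap (theta R j zs).
Proof. by rewrite /pi_mmrc /pi_mrc /pi_cap /pi_offcap; case: (j \in zs k). Qed.

Ltac field_nra := field; repeat (apply/andP; split); apply/eqP => ?; nra.

Ltac unfold_weights :=
  have := ss_den_gt0; have := thetabar_ge0; have := thetabar_le1;
  have := expR_gt0 eps; (have : 0 < n by rewrite ltr0n);
  rewrite /pi_cap /pi_offcap /Gint /t_u /t_l /c1 /c2 /=;
  move: (ss_den d s eps) (expR eps) => D e *.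

Lemma pi_cap_offcap_mass x : n * x * pi_cap x + n * (1 - x) * pi_offcap x = 1.
Proof. by unfold_weights; case: ltgtP => [x_tb|tb_x|->]; field_nra. Qed.

Lemma pi_cap_mass x : n * x * pi_cap x = Gint d s eps x.
Proof.
by unfold_weights; case: ltgtP => [x_tb|tb_x|->]; rewrite ?addr0 ?add0r; field_nra.
Qed.

Lemma card_cap_theta j (zs : cands d N) :
  #|[set k | j \in zs k]|%:R = n * theta R j zs.
Proof. by rewrite /theta mulrC divfK // pnatr_eq0 -lt0n. Qed.

Lemma card_offcap_theta j (zs : cands d N) :
  #|~: [set k | j \in zs k]|%:R = n * (1 - theta R j zs).
Proof.
apply: (addrI #|[set k | j \in zs k]|%:R).
by rewrite -natrD cardsC card_ord card_cap_theta; ring.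
Qed.

Lemma sum_pi_mmrc j (zs : cands d N) : \sum_k pi_mmrc s eps j zs k = 1.
Proof.
rewrite (eq_bigr (fun k => if k \in [set k | j \in zs k] then pi_cap (theta R j zs)
                          else pi_offcap (theta R j zs))) => [|k _].
  rewrite sumr_if_mem -[pi_cap _ *+ _]mulr_natl -[pi_offcap _ *+ _]mulr_natl.
  by rewrite card_cap_theta card_offcap_theta pi_cap_offcap_mass.
by rewrite pi_mmrcE inE.
Qed.

Lemma sum_pi_mmrc_cap j (zs : cands d N) :
  \sum_k pi_mmrc s eps j zs k * (j \in zs k)%:R = Gint d s eps (theta R j zs).
Proof.
rewrite (eq_bigr (fun k => if k \in [set k | j \in zs k] then pi_cap (theta R j zs)
                          else 0)) => [|k _].
  rewrite sumr_if_mem mul0rn addr0 -[pi_cap _ *+ _]mulr_natl.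
  by rewrite card_cap_theta pi_cap_mass.
by rewrite pi_mmrcE inE; case: (j \in zs k); rewrite ?mulr1 ?mulr0.
Qed.

Local Notation W := (#|Zset d s|%:R : R).

Lemma card_Zset : #|Zset d s| = 'C(d, s).
Proof. by rewrite card_draws card_ord. Qed.

Lemma card_Zset_gt0 : 0 < W.
Proof. by rewrite card_Zset ltr0n bin_gt0 ltnW. Qed.

Lemma card_Zset_notin j : #|[set A in Zset d s | j \notin A]|%:R = (1 - tb) * W.
Proof.
have -> : [set A in Zset d s | j \notin A]
          = [set A : {set 'I_d} | A \subset [set~ j] & #|A| == s].
  by apply/setP => A; rewrite !inE finset.subsetC finset.sub1set !inE andbC.
rewrite cards_draws cardsC1 card_ord card_Zset /thetabar.
apply: (mulfI (_ : d%:R != 0)); first by rewrite pnatr_eq0 -lt0n.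
by rewrite -natrM mul_bin_down natrM natrB 1?ltnW //; field; rewrite pnatr_eq0 -lt0n.
Qed.

Lemma card_Zset_mem j : #|[set A in Zset d s | j \in A]|%:R = tb * W.
Proof.
have split : (#|[set A in Zset d s | j \in A]| + #|[set A in Zset d s | j \notin A]|
              = #|Zset d s|)%N.
  rewrite -(cardsID [set A : {set 'I_d} | j \in A] (Zset d s)).
  by congr (_ + _)%N; apply: eq_card => A; rewrite !inE // andbC.
apply: (addIr #|[set A in Zset d s | j \notin A]|%:R).
by rewrite -natrD split card_Zset_notin mulrBl mul1r addrC subrK.
Qed.

Local Notation m := (m_mmrc d s N eps).
Local Notation b := (b_mmrc d s N eps).

(* [mean_zK j i] is the i-th coordinate of E[z_K] on input e_j. *)
Definition mean_zK (j i : 'I_d) : R :=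
  W ^- N * \sum_(zs : cands d N | [forall k, zs k \in Zset d s])
              \sum_k pi_mmrc s eps j zs k * (i \in zs k)%:R.

Lemma sum_admissible_const (c : R) :
  \sum_(zs : cands d N | [forall k, zs k \in Zset d s]) c = c * W ^+ N.
Proof.
rewrite (eq_bigl (mem (ffun_on (mem (Zset d s))))) => [|zs]; last first.
  by apply/forallP/ffun_onP.
by rewrite sumr_const card_ffun_on card_ord -natrX mulr_natr.
Qed.

Lemma E_xhat_entry j i : E_xhat s N eps j 0 i = m^-1 * (mean_zK j i - b).
Proof.
pose sel (zs : cands d N) := \sum_k pi_mmrc s eps j zs k * (i \in zs k)%:R.
have xhat_avg (zs : cands d N) :
    (\sum_k pi_mmrc s eps j zs k *: xhat s eps zs k) 0 i = m^-1 * (sel zs - b).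
  rewrite -[b in RHS]mulr1 -(sum_pi_mmrc j zs) summxE mulr_sumr -sumrB mulr_sumr.
  by apply: eq_bigr => k _; rewrite /xhat !mxE; ring.
rewrite /E_xhat /mean_zK summxE.
under eq_bigr do rewrite mxE xhat_avg mulrCA mulrBr.
rewrite -mulr_sumr sumrB -mulr_sumr sum_admissible_const /sel.
by rewrite mulrAC mulVf ?mul1r // expf_neq0 // lt0r_neq0 // card_Zset_gt0.
Qed.

Lemma mean_zK_diag j : mean_zK j j = G d s N eps.
Proof.
rewrite /mean_zK; under eq_bigr do rewrite sum_pi_mmrc_cap /theta.
rewrite (sum_ffun_preimset_card 'I_N (Zset d s) (fun A => j \in A)
           (fun r => Gint d s eps (r%:R / N%:R))) card_ord mulr_sumr.
apply: eq_bigr => r _.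
rewrite -[Gint _ _ _ _ *+ _]mulr_natr !natrM !natrX card_Zset_mem card_Zset_notin !exprMn.
have W_neq0 : W != 0 by rewrite lt0r_neq0 ?card_Zset_gt0.
have -> : W ^+ N = W ^+ r * W ^+ (N - r) by rewrite -exprD subnKC // -ltnS.
by field; rewrite !expf_neq0.
Qed.

Lemma sum_mean_zK j : \sum_i mean_zK j i = s%:R.
Proof.
have output_sum (zs : cands d N) : [forall k, zs k \in Zset d s] ->
    \sum_i \sum_k pi_mmrc s eps j zs k * (i \in zs k)%:R = s%:R.
  move=> /forallP zsZ; rewrite exchange_big.
  rewrite (eq_bigr (fun k => pi_mmrc s eps j zs k * s%:R)) => [|k _].
    by rewrite -mulr_suml sum_pi_mmrc mul1r.
  rewrite -mulr_sumr (eq_bigr (fun i => if i \in zs k then 1 else 0)) => [|i _].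
    by have /[!inE] /eqP card_zs := zsZ k; rewrite sumr_if_mem mul0rn addr0 card_zs.
  by case: (i \in zs k).
rewrite /mean_zK -mulr_sumr exchange_big (eq_bigr _ (fun zs => output_sum zs)).
rewrite sum_admissible_const mulrCA mulVf ?mulr1 //.
by rewrite expf_neq0 // lt0r_neq0 // card_Zset_gt0.
Qed.

Lemma mean_zK_perm j (sigma : {perm 'I_d}) i :
  sigma j = j -> mean_zK j (sigma i) = mean_zK j i.
Proof.
move=> sigma_j.
pose act (zs : cands d N) : cands d N := [ffun k => sigma @: zs k].
have mem_act (A : {set 'I_d}) x : (sigma x \in sigma @: A) = (x \in A).
  exact: mem_imset A x (@perm_inj _ sigma).
have j_act (A : {set 'I_d}) : (j \in sigma @: A) = (j \in A) by rewrite -{1}sigma_j mem_act.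
have act_inj : injective act.
  move=> zs zs' /ffunP act_eq; apply/ffunP => k.
  by have /[!ffunE] /(imset_inj (@perm_inj _ sigma)) := act_eq k.
have theta_act zs : theta R j (act zs) = theta R j zs.
  by rewrite /theta; congr (_%:R / _); apply: eq_card => k; rewrite !inE ffunE j_act.
rewrite /mean_zK (reindex_inj act_inj); congr (_ * _); apply: eq_big => [zs | zs _].
  by apply: eq_forallb => k; rewrite ffunE !inE card_imset //; apply: perm_inj.
by apply: eq_bigr => k _; rewrite !pi_mmrcE theta_act !ffunE j_act mem_act.
Qed.

Let d_sub1_neq0 : d%:R - 1 != 0 :> R.
Proof. by rewrite subr_eq0 pnatr_eq1 gtn_eqF // (leq_ltn_trans s_gt0 s_lt_d). Qed.

Lemma m_mmrcE : m = G d s N eps - b.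
Proof. by rewrite /m_mmrc /b_mmrc; field. Qed.

Lemma mean_zK_offdiag j i : i != j -> mean_zK j i = b.
Proof.
move=> i_neq_j.
have offdiag_const i' : i' != j -> mean_zK j i' = mean_zK j i.
  by move=> i'_neq_j; rewrite -(tpermL i' i) mean_zK_perm ?tpermD.
have := sum_mean_zK j.
rewrite (bigD1 j) //= mean_zK_diag (eq_bigr _ offdiag_const) sumr_const cardC1 card_ord.
rewrite -[mean_zK j i *+ _]mulr_natr -subn1 natrB // => total.
by rewrite /b_mmrc -total; field.
Qed.

End MMRC.

Theorem lemma2 (R : realType) (d N s : nat) (eps : R) :
  (2 <= d)%N -> 0 < eps ->
  (s%:Z = Num.ceil (d%:R / (1 + expR eps)))%R ->
  (0 < N)%N ->
  @m_mmrc R d s N eps != 0 ->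
  forall j : 'I_d, @E_xhat R d s N eps j = @evec R d j.
Proof.
move=> d_ge2 eps_gt0 s_ceil N_gt0 m_neq0 j.
have /andP[s_gt0 s_lt_d] : (0 < s < d)%N.
  have e_gt1 : 1 < expR eps by rewrite expR_gt1.
  have d_ge2R : 2 <= d%:R :> R by rewrite (ler_nat R 2).
  apply: (ceil_nat_bounds s_ceil); first by rewrite divr_gt0 //; lra.
  by rewrite ler_pdivrMr; [nra | lra].
apply/rowP => i; rewrite E_xhat_entry // /evec mxE eqxx /=.
have [->|i_neq_j] := eqVneq i j.
  by rewrite mean_zK_diag // -m_mmrcE // mulVf.
by rewrite mean_zK_offdiag // subrr mulr0.
Qed.
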